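(* Let $m,k\in\mathbb{Z}$, let $(H,\alpha)$ be a monoidal Hom-bialgebra and $(A,\beta)$ a monoidal Hom-algebra which is a left weak $(H,\alpha)$-Hom-module algebra via $h\otimes a\mapsto h\cdot a$ and a left $(H,\alpha)$-Hom-comodule coalgebra with coaction $a\mapsto a_{(-1)}\otimes a_{(0)}$, and let $\sigma:H\otimes H\to A$ be linear. Suppose that $A\otimes H$, with the $(m,k)$-Hom-crossed product multiplication $(a\otimes h)(b\otimes g)=a[(\alpha^{m}(h_{11})\cdot\beta^{-2}(b))\sigma(\alpha^{k+1}(h_{12}),\alpha^{k}(g_{1}))]\otimes\alpha(h_{2}g_{2})$, unit $1_A\otimes1_H$, the $m$-Hom-smash coproduct comultiplication $\Delta(a\otimes h)=a_{1}\otimes\alpha^{m}(a_{2(-1)})\alpha^{-1}(h_{1})\otimes\beta(a_{2(0)})\otimes h_{2}$, counit $\varepsilon(a\otimes h)=\varepsilon(a)\varepsilon(h)$ and structure map $\beta\otimes\alpha$, is a monoidal Hom-bialgebra; denote it $A^{\sharp_\sigma}_{\rtimes}H$. Suppose $(H,\alpha)$ is a $\sigma$-monoidal Hom-Hopf algebra with $\sigma$-antipode $S_H$, and $S_A:A\to A$ is a linear map with $\beta\circ S_A=S_A\circ\beta$ which is a convolution inverse of $\mathrm{id}_A$, i.e. $S_A(a_1)a_2=\varepsilon(a)1_A=a_1S_A(a_2)$. Then $A^{\sharp_\sigma}_{\rtimes}H$ is a monoidal Hom-Hopf algebra with antipode $$S(a\otimes h)=\big(1_A\otimes S_H(\alpha^{m-1}(a_{(-1)})\alpha^{-2}(h))\big)\big(S_A(a_{(0)})\otimes1_H\big),$$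 the product being that of $A^{\sharp_\sigma}_{\rtimes}H$.
   Context: Field $k$; Sweedler notation. Monoidal Hom-algebra $(A,\beta)$: $\beta(a)(bc)=(ab)\beta(c)$, $\beta(ab)=\beta(a)\beta(b)$, $a1=1a=\beta(a)$, $\beta(1)=1$, $\beta$ a linear automorphism. Monoidal Hom-coalgebra $(C,\gamma)$: $\gamma^{-1}(c_1)\otimes\Delta(c_2)=\Delta(c_1)\otimes\gamma^{-1}(c_2)$, $\Delta\gamma=(\gamma\otimes\gamma)\Delta$, $c_1\varepsilon(c_2)=\gamma^{-1}(c)=\varepsilon(c_1)c_2$, $\varepsilon\gamma=\varepsilon$. Monoidal Hom-bialgebra: both with the same structure map and $\Delta,\varepsilon$ multiplicative and unital; a monoidal Hom-Hopf algebra additionally has a linear $S$ commuting with the structure map and with $S(x_1)x_2=\varepsilon(x)1=x_1S(x_2)$. Left weak $(H,\alpha)$-Hom-module algebra: $h\cdot(ab)=(h_1\cdot a)(h_2\cdot b)$, $h\cdot1_A=\varepsilon(h)1_A$. Left $(H,\alpha)$-Hom-comodule $(M,\mu)$: $\Delta_H(x_{(-1)})\otimes\mu^{-1}(x_{(0)})=\alpha^{-1}(x_{(-1)})\otimes x_{(0)(-1)}\otimes x_{(0)(0)}$, $\rho(\mu(x))=\alpha(x_{(-1)})\otimes\mu(x_{(0)})$, $\varepsilon(x_{(-1)})x_{(0)}=\mu^{-1}(x)$; Hom-comodule coalgebra: moreover $b_{(-1)}\otimes b_{(0)1}\otimes b_{(0)2}=b_{1(-1)}b_{2(-1)}\otimes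 b_{1(0)}\otimes b_{2(0)}$, $\varepsilon(b_{(0)})b_{(-1)}=\varepsilon(b)1_H$. $\sigma$-antipode: a linear map $S:H\to H$ is a $\sigma$-antipode of $(H,\alpha)$ if $\alpha\circ S=S\circ\alpha$ and, for all $h\in H$, $(\sigma\otimes m_H)\Delta_{H\otimes H}(\mathrm{id}_H\otimes S)\Delta_H(h)=\varepsilon(h)1_A\otimes1_H$ and $(\sigma\otimes m_H)\Delta_{H\otimes H}(S\otimes\mathrm{id}_H)\Delta_H(h)=\varepsilon(h)1_A\otimes1_H$, where $\Delta_{H\otimes H}(x\otimes y)=(x_1\otimes y_1)\otimes(x_2\otimes y_2)$ and $m_H$ is the multiplication of $H$; then $(H,\alpha)$ is called a $\sigma$-monoidal Hom-Hopf algebra. *)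

(* Tensor products of K-vector spaces (lmodType K) are
   constructed here from scratch (MathComp has none), as formal finite sums
   of pairs modulo the relation "equal under every bilinear map". *)
From HB Require Import structures.
From mathcomp Require Import all_boot all_algebra.
From mathcomp Require Import boolp.
From Stdlib Require Import ClassicalEpsilon ProofIrrelevance.

Set Implicit Arguments.
Unset Strict Implicit.
Unset Printing Implicit Defensive.

Import GRing.Theory.
Local Open Scope ring_scope.

Section Linearity.
Variable K : fieldType.

Definition lin (V W : lmodType K) (f : V -> W) :=
  forall a x y, f (a *: x + y) = a *: f x + f y.

Definition linK (V : lmodType K) (f : V -> K) :=
  forall a x y, f (a *: x + y) = a * f x + f y.

Definition bilin (V W U : lmodType K) (f : V -> W -> U) :=
  (forall w a x y, f (a *: x + y) w = a *: f x w + f y w) /\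
  (forall v a x y, f v (a *: x + y) = a *: f v x + f v y).

End Linearity.

Section Tensor.
Variables (K : fieldType) (V W : lmodType K).

Definition tsum (U : lmodType K) (f : V -> W -> U) (s : seq (V * W)) : U :=
  \sum_(p <- s) f p.1 p.2.

Definition tequiv (s t : seq (V * W)) : Prop :=
  forall (U : lmodType K) (f : V -> W -> U), bilin f -> tsum f s = tsum f t.

Definition tensor_carrier :=
  {P : seq (V * W) -> Prop | exists s, P = tequiv s}.

HB.instance Definition _ := gen_eqMixin tensor_carrier.
HB.instance Definition _ := gen_choiceMixin tensor_carrier.

Definition tclass (s : seq (V * W)) : tensor_carrier :=
  exist _ (tequiv s) (ex_intro _ s erefl).

Definition trep (x : tensor_carrier) : seq (V * W) :=
  proj1_sig (constructive_indefinite_description _ (proj2_sig x)).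

(* the linear map V (x) W -> U induced by f (meaningful for bilinear f) *)
Definition tlift (U : lmodType K) (f : V -> W -> U) (x : tensor_carrier) : U :=
  tsum f (trep x).

Lemma tequiv_refl s : tequiv s s. Proof. by []. Qed.
Lemma tequiv_sym s t : tequiv s t -> tequiv t s.
Proof. by move=> h U f hf; rewrite (h U f hf). Qed.
Lemma tequiv_trans s t u : tequiv s t -> tequiv t u -> tequiv s u.
Proof. by move=> h1 h2 U f hf; rewrite (h1 U f hf) (h2 U f hf). Qed.

Lemma tclassK x : tclass (trep x) = x.
Proof.
rewrite /trep; case: x => P hP /=.
case: (constructive_indefinite_description _ hP) => s hs /=.
subst P; rewrite /tclass; f_equal; exact: proof_irrelevance.
Qed.

Lemma tclass_eq s t : tequiv s t -> tclass s = tclass t.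
Proof.
move=> h; rewrite /tclass.
have E : tequiv s = tequiv t.
  apply: funext => u; apply: propext; split => h'.
  - exact: tequiv_trans (tequiv_sym h) h'.
  - exact: tequiv_trans h h'.
move: (ex_intro _ s _) (ex_intro _ t _); rewrite E => p q.
f_equal; exact: proof_irrelevance.
Qed.

Lemma trep_class s : tequiv s (trep (tclass s)).
Proof.
rewrite /trep /=.
case: (constructive_indefinite_description _ _) => r /= -> .
exact: tequiv_refl.
Qed.

Lemma tlift_class (U : lmodType K) (f : V -> W -> U) s :
  bilin f -> tlift f (tclass s) = tsum f s.
Proof. by move=> hf; rewrite /tlift -(trep_class s hf). Qed.

Lemma tensor_ext (x y : tensor_carrier) :
  (forall (U : lmodType K) (f : V -> W -> U), bilin f -> tlift f x = tlift f y) ->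
  x = y.
Proof. by move=> h; rewrite -(tclassK x) -(tclassK y); apply: tclass_eq. Qed.

Definition tzero : tensor_carrier := tclass [::].
Definition tadd (x y : tensor_carrier) := tclass (trep x ++ trep y).
Definition topp (x : tensor_carrier) :=
  tclass (map (fun p => (- p.1, p.2)) (trep x)).
Definition tscale (a : K) (x : tensor_carrier) :=
  tclass (map (fun p => (a *: p.1, p.2)) (trep x)).

Section Bil.
Variables (U : lmodType K) (f : V -> W -> U) (hf : bilin f).

Lemma bil0l w : f 0 w = 0.
Proof.
have := hf.1 w 1 0 0; rewrite !scale1r addr0 => h.
by apply: (addrI (f 0 w)); rewrite addr0 -h.
Qed.

Lemma bilZl a v w : f (a *: v) w = a *: f v w.
Proof. by have := hf.1 w a v 0; rewrite addr0 bil0l addr0. Qed.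

Lemma bilNl v w : f (- v) w = - f v w.
Proof. by rewrite -scaleN1r bilZl scaleN1r. Qed.

Lemma tlift0 : tlift f tzero = 0.
Proof. by rewrite tlift_class // /tsum big_nil. Qed.

Lemma tliftD x y : tlift f (tadd x y) = tlift f x + tlift f y.
Proof. by rewrite tlift_class // /tsum big_cat. Qed.

Lemma tliftN x : tlift f (topp x) = - tlift f x.
Proof.
rewrite tlift_class // /tsum big_map /tlift /tsum.
rewrite (big_endo _ (@opprD U) (oppr0 U)).
by apply: eq_bigr => p _; rewrite bilNl.
Qed.

Lemma tliftZ a x : tlift f (tscale a x) = a *: tlift f x.
Proof.
rewrite tlift_class // /tsum big_map /tlift /tsum scaler_sumr.
by apply: eq_bigr => p _; rewrite bilZl.
Qed.
End Bil.

Lemma taddA : associative tadd.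
Proof. by move=> x y z; apply: tensor_ext => U f hf; rewrite !tliftD // addrA. Qed.
Lemma taddC : commutative tadd.
Proof. by move=> x y; apply: tensor_ext => U f hf; rewrite !tliftD // addrC. Qed.
Lemma tadd0 : left_id tzero tadd.
Proof. by move=> x; apply: tensor_ext => U f hf; rewrite !tliftD // tlift0 // add0r. Qed.
Lemma taddN : left_inverse tzero topp tadd.
Proof.
by move=> x; apply: tensor_ext => U f hf; rewrite tliftD // tliftN // tlift0 // addNr.
Qed.

HB.instance Definition _ :=
  GRing.isZmodule.Build tensor_carrier taddA taddC tadd0 taddN.

Lemma tscaleA a b x : tscale a (tscale b x) = tscale (a * b) x.
Proof. by apply: tensor_ext => U f hf; rewrite !tliftZ // scalerA. Qed.
Lemma tscale1 : left_id 1 tscale.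
Proof. by move=> x; apply: tensor_ext => U f hf; rewrite !tliftZ // scale1r. Qed.
Lemma tscaleDr : right_distributive tscale +%R.
Proof.
by move=> a x y; apply: tensor_ext => U f hf; rewrite /= !(tliftZ, tliftD) // scalerDr.
Qed.
Lemma tscaleDl x : {morph tscale^~ x : a b / a + b}.
Proof.
by move=> a b; apply: tensor_ext => U f hf; rewrite /= !(tliftZ, tliftD) // scalerDl.
Qed.

HB.instance Definition _ :=
  GRing.Zmodule_isLmodule.Build K tensor_carrier tscaleA tscale1 tscaleDr tscaleDl.

Definition tensor : lmodType K := tensor_carrier.

Definition tm (v : V) (w : W) : tensor := tclass [:: (v, w)].

End Tensor.

Arguments tlift {K V W U} f x.
Arguments tm {K V W} v w.

Section TensorOps.
Variable K : fieldType.

Definition tliftK (V W : lmodType K) (f : V -> W -> K) (x : tensor V W) : K :=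
  @tlift K V W K^o f x.

Definition tmap (V W V' W' : lmodType K) (f : V -> V') (g : W -> W')
  (x : tensor V W) : tensor V' W' := tlift (fun v w => tm (f v) (g w)) x.

Definition tassoc (U V W : lmodType K) (x : tensor (tensor U V) W)
  : tensor U (tensor V W) :=
  tlift (fun y w => tlift (fun u v => tm u (tm v w)) y) x.

Definition tmul2 (A B : lmodType K) (mulA : A -> A -> A) (mulB : B -> B -> B)
  (x y : tensor A B) : tensor A B :=
  tlift (fun a b => tlift (fun a' b' => tm (mulA a a') (mulB b b')) y) x.

End TensorOps.

(* integer powers f^n of an automorphism f with inverse g *)
Definition zit (T : Type) (f g : T -> T) (n : int) : T -> T :=
  match n with
  | Posz n => iter n f
  | Negz n => iter n.+1 g
  end.

Section HomStructures.
Variable K : fieldType.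

Definition hom_aut (V : lmodType K) (g gi : V -> V) :=
  [/\ lin g, cancel g gi & cancel gi g].

Record monoidal_hom_algebra (A : lmodType K) (mul : A -> A -> A) (one : A)
    (b bi : A -> A) : Prop := {
  ha_aut : hom_aut b bi;
  ha_bilin : bilin mul;
  ha_assoc : forall x y z, mul (b x) (mul y z) = mul (mul x y) (b z);
  ha_mult : forall x y, b (mul x y) = mul (b x) (b y);
  ha_unitr : forall x, mul x one = b x;
  ha_unitl : forall x, mul one x = b x;
  ha_one : b one = one }.

Record monoidal_hom_coalgebra (C : lmodType K) (D : C -> tensor C C)
    (e : C -> K) (g gi : C -> C) : Prop := {
  hc_aut : hom_aut g gi;
  hc_linD : lin D;
  hc_line : linK e;
  (* gi(c_1) (x) D(c_2) = D(c_1) (x) gi(c_2) *)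
  hc_coassoc : forall c, tassoc (tmap D gi (D c)) = tmap gi D (D c);
  hc_Dg : forall c, D (g c) = tmap g g (D c);
  hc_counitl : forall c, tlift (fun x y => e y *: x) (D c) = gi c;
  hc_counitr : forall c, tlift (fun x y => e x *: y) (D c) = gi c;
  hc_eg : forall c, e (g c) = e c }.

Record monoidal_hom_bialgebra (H : lmodType K) (mul : H -> H -> H) (one : H)
    (D : H -> tensor H H) (e : H -> K) (a ai : H -> H) : Prop := {
  hb_alg : monoidal_hom_algebra mul one a ai;
  hb_coalg : monoidal_hom_coalgebra D e a ai;
  hb_Dmul : forall x y, D (mul x y) = tmul2 mul mul (D x) (D y);
  hb_Done : D one = tm one one;
  hb_emul : forall x y, e (mul x y) = e x * e y;
  hb_eone : e one = 1 }.

Definition is_antipode (H : lmodType K) (mul : H -> H -> H) (one : H)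
    (D : H -> tensor H H) (e : H -> K) (a : H -> H) (S : H -> H) : Prop :=
  [/\ lin S, (forall x, a (S x) = S (a x)),
      (forall x, tlift (fun y z => mul (S y) z) (D x) = e x *: one)
    & (forall x, tlift (fun y z => mul y (S z)) (D x) = e x *: one)].

Record monoidal_hom_hopf (H : lmodType K) (mul : H -> H -> H) (one : H)
    (D : H -> tensor H H) (e : H -> K) (a ai : H -> H) (S : H -> H) : Prop := {
  hh_bialg : monoidal_hom_bialgebra mul one D e a ai;
  hh_antipode : is_antipode mul one D e a S }.

Record weak_hom_module_algebra (H A : lmodType K) (mulA : A -> A -> A)
    (oneA : A) (DH : H -> tensor H H) (eH : H -> K) (act : H -> A -> A)
    : Prop := {
  wm_bilin : bilin act;
  wm_mul : forall h x y,
    act h (mulA x y) = tlift (fun h1 h2 => mulA (act h1 x) (act h2 y)) (DH h);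
  wm_one : forall h, act h oneA = eH h *: oneA }.

Record hom_comodule (H M : lmodType K) (DH : H -> tensor H H) (eH : H -> K)
    (a ai : H -> H) (mu mui : M -> M) (rho : M -> tensor H M) : Prop := {
  hcm_aut : hom_aut mu mui;
  hcm_lin : lin rho;
  (* D_H(x_(-1)) (x) mui(x_(0)) = ai(x_(-1)) (x) x_(0)(-1) (x) x_(0)(0) *)
  hcm_coassoc : forall x, tassoc (tmap DH mui (rho x)) = tmap ai rho (rho x);
  hcm_mu : forall x, rho (mu x) = tmap a mu (rho x);
  hcm_counit : forall x, tlift (fun h m => eH h *: m) (rho x) = mui x }.

Record hom_comodule_coalgebra (H A : lmodType K) (mulH : H -> H -> H)
    (oneH : H) (DH : H -> tensor H H) (eH : H -> K) (a ai : H -> H)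
    (DA : A -> tensor A A) (eA : A -> K) (b bi : A -> A)
    (rho : A -> tensor H A) : Prop := {
  hcc_comod : hom_comodule DH eH a ai b bi rho;
  (* x_(-1) (x) x_(0)1 (x) x_(0)2 = x_1(-1) x_2(-1) (x) x_1(0) (x) x_2(0) *)
  hcc_D : forall x,
    tmap id DA (rho x) =
    tlift (fun x1 x2 =>
      tlift (fun h1 y1 =>
        tlift (fun h2 y2 => tm (mulH h1 h2) (tm y1 y2)) (rho x2)) (rho x1))
      (DA x);
  hcc_e : forall x, tlift (fun h y => eA y *: h) (rho x) = eA x *: oneH }.

Definition sigma_antipode (H A : lmodType K) (mulH : H -> H -> H) (oneH : H)
    (DH : H -> tensor H H) (eH : H -> K) (a : H -> H) (oneA : A)
    (sigma : H -> H -> A) (S : H -> H) : Prop :=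
  [/\ lin S, (forall h, a (S h) = S (a h)),
    (* (sigma (x) m_H) D_{H(x)H} (id (x) S) D_H (h) = e(h) 1_A (x) 1_H *)
    (forall h,
      tlift (fun h1 h2 =>
        tlift (fun x1 x2 =>
          tlift (fun y1 y2 => tm (sigma x1 y1) (mulH x2 y2)) (DH (S h2)))
          (DH h1)) (DH h) = eH h *: tm oneA oneH)
  & (* (sigma (x) m_H) D_{H(x)H} (S (x) id) D_H (h) = e(h) 1_A (x) 1_H *)
    (forall h,
      tlift (fun h1 h2 =>
        tlift (fun x1 x2 =>
          tlift (fun y1 y2 => tm (sigma x1 y1) (mulH x2 y2)) (DH h2))
          (DH (S h1))) (DH h) = eH h *: tm oneA oneH)].

End HomStructures.

Section CrossedProduct.
Variables (K : fieldType) (H A : lmodType K).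
Variables (mulH : H -> H -> H) (oneH : H) (DH : H -> tensor H H) (eH : H -> K)
  (alpha alphai : H -> H).
Variables (mulA : A -> A -> A) (oneA : A) (DA : A -> tensor A A) (eA : A -> K)
  (beta betai : A -> A).
Variables (act : H -> A -> A) (rho : A -> tensor H A) (sigma : H -> H -> A).
Variables (m k : int).

Local Notation al n := (zit alpha alphai n).
Local Notation be n := (zit beta betai n).

(* (a(x)h)(b(x)g) =
   a[(al^m(h11) . be^-2(b)) sigma(al^(k+1)(h12), al^k(g1))] (x) al(h2 g2) *)
Definition cp_mul (X Y : tensor A H) : tensor A H :=
  tlift (fun x h => tlift (fun y g =>
    tlift (fun h1 h2 => tlift (fun h11 h12 => tlift (fun g1 g2 =>
      tm (mulA x (mulA (act (al m h11) (be (-2) y))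
                       (sigma (al (k + 1) h12) (al k g1))))
         (alpha (mulH h2 g2)))
      (DH g)) (DH h1)) (DH h)) Y) X.

Definition cp_one : tensor A H := tm oneA oneH.

(* D(a(x)h) = a_1 (x) al^m(a_2(-1)) ai(h_1) (x) be(a_2(0)) (x) h_2 *)
Definition sm_D (X : tensor A H) : tensor (tensor A H) (tensor A H) :=
  tlift (fun x h => tlift (fun x1 x2 => tlift (fun y z => tlift (fun h1 h2 =>
    tm (tm x1 (mulH (al m y) (alphai h1))) (tm (beta z) h2))
    (DH h)) (rho x2)) (DA x)) X.

Definition sm_e (X : tensor A H) : K := tliftK (fun x h => eA x * eH h) X.

Definition cp_str : tensor A H -> tensor A H := tmap beta alpha.
Definition cp_stri : tensor A H -> tensor A H := tmap betai alphai.

Definition cp_S (SH : H -> H) (SA : A -> A) (X : tensor A H) : tensor A H :=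
  tlift (fun x h => tlift (fun y z =>
    cp_mul (tm oneA (SH (mulH (al (m - 1) y) (al (-2) h)))) (tm (SA z) oneH))
    (rho x)) X.

End CrossedProduct.

From HB Require Import structures.
From mathcomp Require Import all_boot all_algebra.
From mathcomp Require Import zify.
Set Implicit Arguments.
Unset Strict Implicit.
Unset Printing Implicit Defensive.
Import GRing.Theory.
Local Open Scope ring_scope.

(* Two product rules of the crossed product do most of the work:
   (c (x) 1)(b (x) g) = cb (x) alpha(g), which follows from the unit law
   because the left-hand side depends on c only through left multiplication
   by c, and (d (x) g)(1 (x) g') = d beta(sigma(alpha^k g_1, alpha^k g'_1))
   (x) alpha(g_2 g'_2), which follows from h . 1 = e(h) 1.  With the second
   rule the two sigma-antipode axioms become (1 (x) S_H(h_1))(1 (x) h_2) =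
   e(h) 1 (x) 1 and (d (x) z_1)(1 (x) S_H(z_2)) = e(z) beta(d) (x) 1.
   For S * id, Hom-associativity and the first rule bring S_A(a_1(0)) next
   to a_2(0); the comodule-coalgebra axiom merges the two coactions into
   one, after which S_A * id = e and e(a_(0)) a_(-1) = e(a) 1 leave only
   the first H-identity.  For id * S, coassociativity of the coaction
   produces the second H-identity, and then the counit of the coaction and
   id * S_A = e conclude. *)

Section TensorCalculus.
Variable K : fieldType.
Implicit Types V W U : lmodType K.

Lemma lin0 V W (f : V -> W) : lin f -> f 0 = 0.
Proof.
move=> hf; have := hf 1 0 0; rewrite !scale1r addr0 => h.
by apply: (addrI (f 0)); rewrite addr0 -h.
Qed.

Lemma linD V W (f : V -> W) : lin f -> forall x y, f (x + y) = f x + f y.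
Proof. by move=> hf x y; rewrite -[x in LHS]scale1r hf scale1r. Qed.

Lemma linZ V W (f : V -> W) : lin f -> forall a x, f (a *: x) = a *: f x.
Proof. by move=> hf a x; rewrite -[a *: x]addr0 hf lin0 // addr0. Qed.

Lemma lin_inv V (f g : V -> V) : lin f -> cancel f g -> cancel g f -> lin g.
Proof. by move=> hf fK gK a x y; apply: (can_inj fK); rewrite hf !gK. Qed.

Lemma bilZl V W U (F : V -> W -> U) c x y : bilin F -> F (c *: x) y = c *: F x y.
Proof. by move=> hF; apply: (linZ (hF.1 y)). Qed.

Lemma bilZr V W U (F : V -> W -> U) c x y : bilin F -> F x (c *: y) = c *: F x y.
Proof. by move=> hF; apply: (linZ (hF.2 x)). Qed.

Lemma tlift_tm V W U (f : V -> W -> U) v w : bilin f -> tlift f (tm v w) = f v w.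
Proof. by move=> hf; rewrite /tm tlift_class // /tsum big_seq1. Qed.

Lemma tlift_lin V W U (f : V -> W -> U) : bilin f -> lin (tlift f).
Proof.
move=> hf a x y.
have -> : a *: x + y = tadd (tscale a x) y by [].
by rewrite tliftD // tliftZ.
Qed.

Lemma tlift_push V W U U' (L : U -> U') (f : V -> W -> U) X :
  lin L -> L (tlift f X) = tlift (fun u v => L (f u v)) X.
Proof.
move=> hL; rewrite /tlift /tsum.
exact: (big_morph L (linD hL) (lin0 hL)).
Qed.

Lemma tlift_pushl V W U V2 W2 (F : U -> V2 -> W2) (f : V -> W -> U) X w :
  bilin F -> F (tlift f X) w = tlift (fun u v => F (f u v) w) X.
Proof. by move=> hF; apply: (tlift_push (L := fun t => F t w) _ _ (hF.1 w)). Qed.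

Lemma tlift_pushr V W U V2 W2 (F : V2 -> U -> W2) (f : V -> W -> U) X v0 :
  bilin F -> F v0 (tlift f X) = tlift (fun u v => F v0 (f u v)) X.
Proof. by move=> hF; apply: (tlift_push (L := F v0) _ _ (hF.2 v0)). Qed.

Lemma tlift_addf V W U (f g : V -> W -> U) X :
  tlift (fun u v => f u v + g u v) X = tlift f X + tlift g X.
Proof. by rewrite /tlift /tsum big_split. Qed.

Lemma tlift_scalef V W U (f : V -> W -> U) a X :
  tlift (fun u v => a *: f u v) X = a *: tlift f X.
Proof. by rewrite /tlift /tsum scaler_sumr. Qed.

Lemma eq_tlift V W U (f g : V -> W -> U) X :
  (forall u v, f u v = g u v) -> tlift f X = tlift g X.
Proof. by move=> h; rewrite /tlift /tsum; apply: eq_bigr => p _; rewrite h. Qed.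

Lemma exchange_tlift V W V' W' U (F : V -> W -> V' -> W' -> U) S T :
  tlift (fun x y => tlift (F x y) T) S =
  tlift (fun u v => tlift (fun x y => F x y u v) S) T.
Proof. by rewrite /tlift /tsum; apply: exchange_big. Qed.

Lemma bil_tm V W : bilin (@tm K V W).
Proof.
split=> [w a x y | v a x y]; apply: tensor_ext => U f hf;
  rewrite (tlift_lin hf) !tlift_tm //.
- exact: hf.1.
- exact: hf.2.
Qed.

Lemma tmZl V W c (x : V) (y : W) : tm (c *: x) y = c *: tm x y.
Proof. exact: bilZl (bil_tm V W). Qed.

Lemma tlift_tm_id V W (X : tensor V W) : tlift tm X = X.
Proof.
apply: tensor_ext => U f hf.
rewrite (tlift_push _ _ (tlift_lin hf)).
by apply: eq_tlift => u v; rewrite tlift_tm.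
Qed.

Lemma tensor_lin_ext V W U (L1 L2 : tensor V W -> U) :
  lin L1 -> lin L2 -> (forall v w, L1 (tm v w) = L2 (tm v w)) -> forall X, L1 X = L2 X.
Proof.
move=> h1 h2 h X; rewrite -(tlift_tm_id X) !tlift_push //.
exact: eq_tlift.
Qed.

Lemma lin_idf V : lin (fun x : V => x). Proof. by []. Qed.

Lemma lin_compf V W U (g : W -> U) (f : V -> W) : lin g -> lin f -> lin (fun x => g (f x)).
Proof. by move=> hg hf a x y; rewrite hf hg. Qed.

Lemma lin_bil_l V W U V' (F : V -> W -> U) (f : V' -> V) w :
  bilin F -> lin f -> lin (fun x => F (f x) w).
Proof. by move=> hF hf a x y; rewrite hf hF.1. Qed.

Lemma lin_bil_r V W U V' (F : V -> W -> U) (f : V' -> W) v :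
  bilin F -> lin f -> lin (fun x => F v (f x)).
Proof. by move=> hF hf a x y; rewrite hf hF.2. Qed.

Lemma lin_bil_r0 V W U (F : V -> W -> U) v : bilin F -> lin (F v).
Proof. by move=> hF; exact: hF.2. Qed.

Lemma lin_tlift_t V W U V' (F : V -> W -> U) (f : V' -> tensor V W) :
  bilin F -> lin f -> lin (fun x => tlift F (f x)).
Proof. by move=> hF hf; apply: lin_compf => //; apply: tlift_lin. Qed.

Lemma lin_tlift_f V W U V' (F : V' -> V -> W -> U) T :
  (forall u v, lin (fun x => F x u v)) -> lin (fun x => tlift (F x) T).
Proof.
move=> hF a x y; rewrite -tlift_scalef -tlift_addf.
by apply: eq_tlift => u v; rewrite hF.
Qed.

Lemma lin_scalef V W (f : V -> W) c : lin f -> lin (fun x => c *: f x).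
Proof. by move=> hf a x y; rewrite hf scalerDr !scalerA mulrC. Qed.

Lemma lin_escale V W V' (e : V -> K) (f : V' -> V) (w : W) :
  linK e -> lin f -> lin (fun x => e (f x) *: w).
Proof. by move=> he hf a x y; rewrite hf he scalerDl scalerA. Qed.

Lemma lin_addf V W (f g : V -> W) : lin f -> lin g -> lin (fun x => f x + g x).
Proof. by move=> hf hg a x y; rewrite hf hg scalerDr addrACA. Qed.

Lemma bilinP V W U (f : V -> W -> U) :
  (forall w, lin (fun x => f x w)) -> (forall v, lin (fun y => f v y)) -> bilin f.
Proof. by move=> h1 h2; split=> [w|v]; [apply: h1|apply: h2]. Qed.

Lemma lin_tmap V W V' W' (f : V -> V') (g : W -> W') :
  lin f -> lin g -> lin (tmap f g).
Proof.
move=> hf hg; apply: tlift_lin; split=> [w a x y|v a x y].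
- by rewrite hf (bil_tm V' W').1.
- by rewrite hg (bil_tm V' W').2.
Qed.

End TensorCalculus.

Section IntegerIterates.
Variables (T : Type) (f g : T -> T).
Hypotheses (fK : cancel f g) (gK : cancel g f).

Lemma zitS n x : zit f g (n + 1) x = f (zit f g n x).
Proof.
case: n => [k|[|k]].
- by rewrite /= addn1.
- by rewrite /= gK.
- have -> : Negz k.+1 + 1 = Negz k by lia.
  by rewrite /= gK.
Qed.

Lemma zitP n x : zit f g (n - 1) x = g (zit f g n x).
Proof. by rewrite -{2}(subrK 1 n) zitS fK. Qed.

Lemma zitD n p x : zit f g (n + p) x = zit f g n (zit f g p x).
Proof.
case: n => [k|k].
- elim: k => [|k IH]; first by rewrite add0r.
  by rewrite -addn1 PoszD addrAC zitS IH zitS.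
- elim: k => [|k IH].
  + have -> : Negz 0 + p = p - 1 by lia.
    by rewrite zitP.
  + have -> : Negz k.+1 = Negz k - 1 by lia.
    by rewrite addrAC !zitP IH.
Qed.

End IntegerIterates.

Lemma zit_fix (T : Type) (f g : T -> T) c n : f c = c -> g c = c -> zit f g n c = c.
Proof.
move=> hf hg; case: n => [k|k] /=; elim: k => //= k ->; by [rewrite hf | rewrite hg].
Qed.

Lemma zit_mul (T : Type) (f g : T -> T) (mul : T -> T -> T) n x y :
  (forall x y, f (mul x y) = mul (f x) (f y)) ->
  (forall x y, g (mul x y) = mul (g x) (g y)) ->
  zit f g n (mul x y) = mul (zit f g n x) (zit f g n y).
Proof.
move=> hf hg; case: n => [k|k] /=; elim: k => //= k ->; by [rewrite hf | rewrite hg].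
Qed.

Lemma zit_comm (T T' : Type) (f g : T -> T) (F G : T' -> T') (phi : T -> T') n x :
  (forall x, phi (f x) = F (phi x)) -> (forall x, phi (g x) = G (phi x)) ->
  phi (zit f g n x) = zit F G n (phi x).
Proof.
move=> hf hg; case: n => [k|k] /=; elim: k => //= k <-; by [rewrite hf | rewrite hg].
Qed.

Lemma zit_lin (K : fieldType) (V : lmodType K) (f g : V -> V) n :
  lin f -> lin g -> lin (zit f g n).
Proof.
move=> hf hg; case: n => [k|k] /=.
- elim: k => [|k IH] // a x y.
  have E z : iter k.+1 f z = f (iter k f z) by [].
  by rewrite !E IH hf.
- elim: k => [|k IH] a x y; first by rewrite /= hg.
  have E z : iter k.+2 g z = g (iter k.+1 g z) by [].
  by rewrite !E IH hg.
Qed.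

(* Linearity side conditions: decompose the map syntactically, closing the
   leaves with bil_tm, zit_lin or a (bi)linearity hypothesis in context;
   this is why the section below keeps such facts as local hypotheses. *)
Ltac bil_closed := first [ eassumption | exact: bil_tm ].

Ltac lin_tac :=
  cbv beta;
  match goal with
  | |- lin (fun x => x) => exact: lin_idf
  | |- lin (fun x => tlift ?F (@?f x)) =>
      apply: (lin_tlift_t (F:=F) (f:=f)); [bil_tac | lin_tac]
  | |- lin (fun x => tlift (@?F x) ?T) =>
      apply: (lin_tlift_f (F:=F) T); intros ? ?; lin_tac
  | |- lin (fun x => ?c *: (@?f x)) => apply: (lin_scalef (f:=f) c); lin_tac
  | |- lin (fun x => ?e (@?f x) *: ?w) =>
      apply: (lin_escale (e:=e) (f:=f) w); [eassumption | lin_tac]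
  | |- lin (fun x => (@?f x) + (@?g x)) => apply: (lin_addf (f:=f) (g:=g)); lin_tac
  | |- lin (fun x => ?G (@?f x)) => apply: (lin_compf (g:=G) (f:=f)); [lin_closed | lin_tac]
  | |- lin (fun x => ?F (@?f x) ?w) =>
      apply: (lin_bil_l (F:=F) (f:=f) w); [bil_closed | lin_tac]
  | |- lin (fun x => ?F ?v (@?f x)) =>
      apply: (lin_bil_r (F:=F) (f:=f) v); [bil_closed | lin_tac]
  | |- lin _ => lin_closed
  end
with bil_tac := apply: bilinP => ?; lin_tac
with lin_closed :=
  first [ eassumption
        | exact: lin_idf
        | apply: lin_bil_r0; bil_closed
        | apply: lin_tmap; lin_tac
        | apply: tlift_lin; bil_tac
        | apply: zit_lin; lin_closed ].

Section TensorMaps.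
Variable K : fieldType.
Implicit Types V W U : lmodType K.

Lemma tmap_tm V W V' W' (f : V -> V') (g : W -> W') v w :
  lin f -> lin g -> tmap f g (tm v w) = tm (f v) (g w).
Proof. by move=> hf hg; rewrite /tmap tlift_tm //; bil_tac. Qed.

Lemma tlift_tmap V W V' W' U (F : V' -> W' -> U) (f : V -> V') (g : W -> W') X :
  bilin F -> lin f -> lin g -> tlift F (tmap f g X) = tlift (fun u v => F (f u) (g v)) X.
Proof.
move=> hF hf hg; rewrite /tmap tlift_push; last exact: tlift_lin.
by apply: eq_tlift => u v; rewrite tlift_tm.
Qed.

Lemma tmap_comp V W V' W' V'' W'' (f : V' -> V'') (g : W' -> W'')
    (f' : V -> V') (g' : W -> W') X :
  lin f -> lin g -> lin f' -> lin g' ->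
  tmap f g (tmap f' g' X) = tmap (fun x => f (f' x)) (fun x => g (g' x)) X.
Proof. by move=> hf hg hf' hg'; rewrite {1}/tmap tlift_tmap //; bil_tac. Qed.

Lemma tmap_id V W (f : V -> V) (g : W -> W) X :
  (forall x, f x = x) -> (forall x, g x = x) -> tmap f g X = X.
Proof.
move=> hf hg; rewrite -[RHS]tlift_tm_id /tmap; apply: eq_tlift => u v.
by rewrite hf hg.
Qed.

Lemma tlift_tassoc V1 V2 V3 U (G : V1 -> tensor V2 V3 -> U) Y :
  bilin G -> tlift G (tassoc Y) = tlift (fun y w => tlift (fun u v => G u (tm v w)) y) Y.
Proof.
move=> hG; rewrite /tassoc tlift_push; last exact: tlift_lin.
apply: eq_tlift => y w; rewrite tlift_push; last exact: tlift_lin.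
by apply: eq_tlift => u v; rewrite tlift_tm.
Qed.

Lemma tlift_tmul2 V W U (mV : V -> V -> V) (mW : W -> W -> W) (G : V -> W -> U) X Y :
  bilin G -> tlift G (tmul2 mV mW X Y) =
  tlift (fun a b => tlift (fun a' b' => G (mV a a') (mW b b')) Y) X.
Proof.
move=> hG; rewrite /tmul2 tlift_push; last exact: tlift_lin.
apply: eq_tlift => a b; rewrite tlift_push; last exact: tlift_lin.
by apply: eq_tlift => u v; rewrite tlift_tm.
Qed.

Lemma zit_tmap V V1 V2 (f g : V -> V) (f1 g1 : V1 -> V1) (f2 g2 : V2 -> V2)
    (phi : V -> tensor V1 V2) n x :
  lin f1 -> lin g1 -> lin f2 -> lin g2 ->
  (forall x, phi (f x) = tmap f1 f2 (phi x)) ->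
  (forall x, phi (g x) = tmap g1 g2 (phi x)) ->
  phi (zit f g n x) = tmap (zit f1 g1 n) (zit f2 g2 n) (phi x).
Proof.
move=> l1 l2 l3 l4 hf hg; case: n => [k|k].
- elim: k => [|k IH]; first by rewrite /= tmap_id.
  move: IH => /= IH; rewrite hf IH tmap_comp //;
    try by apply: (@zit_lin _ _ _ _ (Posz k)).
- elim: k => [|k IH]; first by rewrite /= hg.
  move: IH => /= IH; rewrite hg IH tmap_comp //;
    try by apply: (@zit_lin _ _ _ _ (Negz k)).
Qed.

End TensorMaps.

Section CrossedProductAntipode.
Variables (K : fieldType) (H A : lmodType K) (m k : int)
  (mulH : H -> H -> H) (oneH : H) (DH : H -> tensor H H) (eH : H -> K)
  (alpha alphai : H -> H)
  (mulA : A -> A -> A) (oneA : A) (DA : A -> tensor A A) (eA : A -> K)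
  (beta betai : A -> A)
  (act : H -> A -> A) (rho : A -> tensor H A) (sigma : H -> H -> A)
  (SH : H -> H) (SA : A -> A).
Hypotheses
  (hH : monoidal_hom_bialgebra mulH oneH DH eH alpha alphai)
  (hAa : monoidal_hom_algebra mulA oneA beta betai)
  (hAc : monoidal_hom_coalgebra DA eA beta betai)
  (hW : weak_hom_module_algebra mulA oneA DH eH act)
  (hC : hom_comodule_coalgebra mulH oneH DH eH alpha alphai DA eA beta betai rho)
  (bilsigma : bilin sigma)
  (hT : monoidal_hom_bialgebra
    (cp_mul mulH DH alpha alphai mulA beta betai act sigma m k)
    (cp_one oneH oneA)
    (sm_D mulH DH alpha alphai DA beta rho m)
    (sm_e eH eA)
    (cp_str alpha beta) (cp_stri alphai betai))
  (hSH : sigma_antipode mulH oneH DH eH alpha oneA sigma SH)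
  (linSA : lin SA)
  (betaSA : forall a, beta (SA a) = SA (beta a))
  (SA_conv_l : forall a, tlift (fun x y => mulA (SA x) y) (DA a) = eA a *: oneA)
  (SA_conv_r : forall a, tlift (fun x y => mulA x (SA y)) (DA a) = eA a *: oneA).

Local Notation al n := (zit alpha alphai n).
Local Notation be n := (zit beta betai n).
Local Notation mu := (cp_mul mulH DH alpha alphai mulA beta betai act sigma m k).
Local Notation S :=
  (cp_S mulH oneH DH alpha alphai mulA oneA beta betai act rho sigma m k SH SA).
Local Notation B := (cp_str alpha beta).
Local Notation Bi := (cp_stri alphai betai).
Local Notation smD := (sm_D mulH DH alpha alphai DA beta rho m).
Local Notation sme := (sm_e eH eA).

Let hHa := hb_alg hH.
Let hHc := hb_coalg hH.
Let hCm := hcc_comod hC.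
Let linA : lin alpha. Proof. by case: (ha_aut hHa). Qed.
Let alK : cancel alpha alphai. Proof. by case: (ha_aut hHa). Qed.
Let aiK : cancel alphai alpha. Proof. by case: (ha_aut hHa). Qed.
Let linAi : lin alphai. Proof. exact: lin_inv linA alK aiK. Qed.
Let linB : lin beta. Proof. by case: (ha_aut hAa). Qed.
Let beK : cancel beta betai. Proof. by case: (ha_aut hAa). Qed.
Let biK : cancel betai beta. Proof. by case: (ha_aut hAa). Qed.
Let linBi : lin betai. Proof. exact: lin_inv linB beK biK. Qed.
Let bilH : bilin mulH. Proof. exact: ha_bilin hHa. Qed.
Let bilA : bilin mulA. Proof. exact: ha_bilin hAa. Qed.
Let bilAct : bilin act. Proof. exact: wm_bilin hW. Qed.
Let linDH : lin DH. Proof. exact: hc_linD hHc. Qed.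
Let linDA : lin DA. Proof. exact: hc_linD hAc. Qed.
Let linRho : lin rho. Proof. exact: hcm_lin hCm. Qed.
Let leH : linK eH. Proof. exact: hc_line hHc. Qed.
Let leA : linK eA. Proof. exact: hc_line hAc. Qed.
Let linSH : lin SH. Proof. by case: hSH. Qed.
Let bilmu : bilin mu. Proof. exact: ha_bilin (hb_alg hT). Qed.
Let linal n : lin (al n). Proof. exact: zit_lin. Qed.
Let linBT : lin B. Proof. exact: lin_tmap. Qed.
Let linsme : linK sme. Proof. exact: hc_line (hb_coalg hT). Qed.

Let alD n p x : al (n + p) x = al n (al p x). Proof. exact: zitD. Qed.
Let alE n p x : n = p -> al n x = al p x. Proof. by move->. Qed.
Let alC n x : al n (alpha x) = alpha (al n x).
Proof. by rewrite -[alpha x]/(al 1 x) -[alpha (al n x)]/(al 1 _) -!alD addrC. Qed.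
Let aone : alpha oneH = oneH. Proof. exact: ha_one hHa. Qed.
Let alone n : al n oneH = oneH. Proof. by apply: zit_fix; rewrite // -{1}aone alK. Qed.
Let amul x y : alpha (mulH x y) = mulH (alpha x) (alpha y). Proof. exact: ha_mult hHa x y. Qed.
Let aimul x y : alphai (mulH x y) = mulH (alphai x) (alphai y).
Proof. by apply: (can_inj alK); rewrite amul !aiK. Qed.
Let almul n x y : al n (mulH x y) = mulH (al n x) (al n y). Proof. exact: zit_mul. Qed.
Let unitlH x : mulH oneH x = alpha x. Proof. exact: ha_unitl hHa x. Qed.
Let assocH x y z : mulH (alpha x) (mulH y z) = mulH (mulH x y) (alpha z).
Proof. exact: ha_assoc hHa x y z. Qed.
Let DHmul x y : DH (mulH x y) = tmul2 mulH mulH (DH x) (DH y). Proof. exact: hb_Dmul hH x y. Qed.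
Let DHone : DH oneH = tm oneH oneH. Proof. exact: hb_Done hH. Qed.
Let DHn n x : DH (al n x) = tmap (al n) (al n) (DH x).
Proof.
apply: zit_tmap => // y; first exact: hc_Dg hHc y.
by rewrite -{2}(aiK y) (hc_Dg hHc) tmap_comp //; apply/esym/tmap_id => z; exact: alK.
Qed.
Let eHmul x y : eH (mulH x y) = eH x * eH y. Proof. exact: hb_emul hH x y. Qed.
Let eHn n x : eH (al n x) = eH x.
Proof.
have eHa y : eH (alpha y) = eH y by exact: hc_eg hHc y.
by rewrite (@zit_comm _ _ alpha alphai id id eH) ?zit_fix // => y; rewrite -{2}(aiK y) eHa.
Qed.
Let cntrH c : tlift (fun x y => eH x *: y) (DH c) = alphai c. Proof. exact: hc_counitr hHc c. Qed.
Let SHa x : alpha (SH x) = SH (alpha x). Proof. by case: hSH. Qed.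
Let SHn n x : al n (SH x) = SH (al n x).
Proof.
apply/esym/zit_comm => y; first by rewrite SHa.
by apply: (can_inj alK); rewrite aiK SHa aiK.
Qed.

Let bone : beta oneA = oneA. Proof. exact: ha_one hAa. Qed.
Let beone n : be n oneA = oneA. Proof. by apply: zit_fix; rewrite // -{1}bone beK. Qed.
Let unitlA x : mulA oneA x = beta x. Proof. exact: ha_unitl hAa x. Qed.
Let unitrA x : mulA x oneA = beta x. Proof. exact: ha_unitr hAa x. Qed.
Let actone h : act h oneA = eH h *: oneA. Proof. exact: wm_one hW h. Qed.
Let rhob x : rho (beta x) = tmap alpha beta (rho x). Proof. exact: hcm_mu hCm x. Qed.
Let rcnt x : tlift (fun h y => eH h *: y) (rho x) = betai x. Proof. exact: hcm_counit hCm x. Qed.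
Let rcnte x : tlift (fun h y => eA y *: h) (rho x) = eA x *: oneH. Proof. exact: hcc_e hC x. Qed.

Let muB X Y : B (mu X Y) = mu (B X) (B Y). Proof. exact: ha_mult (hb_alg hT) X Y. Qed.
Let assocT X Y Z : mu (B X) (mu Y Z) = mu (mu X Y) (B Z).
Proof. exact: ha_assoc (hb_alg hT) X Y Z. Qed.
Let unitlT X : mu (tm oneA oneH) X = B X. Proof. exact: ha_unitl (hb_alg hT) X. Qed.
Let B_tm a h : B (tm a h) = tm (beta a) (alpha h). Proof. exact: tmap_tm. Qed.
Let Bi_tm a h : Bi (tm a h) = tm (betai a) (alphai h). Proof. exact: tmap_tm. Qed.
Let BK X : Bi (B X) = X.
Proof. by rewrite /cp_stri /cp_str tmap_comp //; apply: tmap_id; [exact: beK | exact: alK]. Qed.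
Let BiK X : B (Bi X) = X.
Proof. by rewrite /cp_stri /cp_str tmap_comp //; apply: tmap_id; [exact: biK | exact: aiK]. Qed.

Lemma cp_mul_tm a h b g : mu (tm a h) (tm b g) =
  tlift (fun h1 h2 => tlift (fun h11 h12 => tlift (fun g1 g2 =>
      tm (mulA a (mulA (act (al m h11) (be (-2) b))
                       (sigma (al (k + 1) h12) (al k g1))))
         (alpha (mulH h2 g2)))
      (DH g)) (DH h1)) (DH h).
Proof. by rewrite /cp_mul !tlift_tm //; bil_tac. Qed.

Lemma cp_mul_oneH_l c b g : mu (tm c oneH) (tm b g) = tm (mulA c b) (alpha g).
Proof.
pose W := tlift (fun g1 g2 =>
  tm (mulA (act oneH (be (-2) b)) (sigma oneH (al k g1))) (alpha g2)) (DH g).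
have E c' : mu (tm c' oneH) (tm b g) = tmap (mulA c') alpha W.
  rewrite cp_mul_tm DHone tlift_tm; last by bil_tac.
  rewrite DHone tlift_tm; last by bil_tac.
  rewrite !alone /W /tmap tlift_push; last by lin_tac.
  by apply: eq_tlift => g1 g2; rewrite tlift_tm ?unitlH //; bil_tac.
have EW : W = tm b g.
  apply: (can_inj BK); rewrite -[B (tm b g)]unitlT E /cp_str.
  by apply: eq_tlift => u v; rewrite unitlA.
by rewrite E EW tmap_tm //; lin_tac.
Qed.

Lemma cp_mul_oneA_r d g g' : mu (tm d g) (tm oneA g') =
  tlift (fun h1 h2 => tlift (fun g1 g2 =>
    tm (mulA d (beta (sigma (al k h1) (al k g1)))) (alpha (mulH h2 g2))) (DH g')) (DH g).
Proof.
rewrite cp_mul_tm; apply: eq_tlift => h1 h2.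
pose F z := tlift (fun g1 g2 =>
  tm (mulA d (beta (sigma (al (k + 1) z) (al k g1)))) (alpha (mulH h2 g2))) (DH g').
have lF : lin F by rewrite /F; lin_tac.
transitivity (tlift (fun h11 h12 => F (eH h11 *: h12)) (DH h1)).
  apply: eq_tlift => h11 h12; rewrite (linZ lF) /F -tlift_scalef.
  apply: eq_tlift => g1 g2.
  by rewrite beone actone eHn (bilZl _ _ _ bilA) unitlA (bilZr _ _ _ bilA) tmZl.
rewrite -tlift_push // cntrH /F.
by apply: eq_tlift => g1 g2; rewrite -[alphai h1]/(al (-1) h1) -alD addrK.
Qed.

(* sigma-antipode axioms, transported by alpha^k so that they match the
   shape produced by cp_mul_oneA_r. *)
Let sigma_SH_l h :
  tlift (fun h1 h2 => tlift (fun x1 x2 => tlift (fun y1 y2 =>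
    tm (sigma (al k x1) (al k y1)) (mulH (al k x2) (al k y2))) (DH h2)) (DH (SH h1))) (DH h)
  = eH h *: tm oneA oneH.
Proof.
have [_ _ _ sigma_SH] := hSH.
rewrite -(eHn k h) -sigma_SH DHn tlift_tmap //; try bil_tac.
apply: eq_tlift => h1 h2; rewrite -SHn !DHn tlift_tmap //; try bil_tac.
by apply: eq_tlift => x1 x2; rewrite tlift_tmap //; bil_tac.
Qed.

Let sigma_SH_r h :
  tlift (fun h1 h2 => tlift (fun x1 x2 => tlift (fun y1 y2 =>
    tm (sigma (al k x1) (al k y1)) (mulH (al k x2) (al k y2))) (DH (SH h2))) (DH h1)) (DH h)
  = eH h *: tm oneA oneH.
Proof.
have [_ _ sigma_SH _] := hSH.
rewrite -(eHn k h) -sigma_SH DHn tlift_tmap //; try bil_tac.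
apply: eq_tlift => h1 h2; rewrite -SHn !DHn tlift_tmap //; try bil_tac.
by apply: eq_tlift => x1 x2; rewrite tlift_tmap //; bil_tac.
Qed.

Lemma cp_mul_SH_l h :
  tlift (fun h1 h2 => mu (tm oneA (SH h1)) (tm oneA h2)) (DH h) = eH h *: tm oneA oneH.
Proof.
pose L := tmap (fun a => mulA oneA (beta a)) (fun z => alpha (al (- k) z)).
have lL : lin L by rewrite /L; lin_tac.
rewrite -[RHS](_ : L (eH h *: tm oneA oneH) = _); last first.
  by rewrite (linZ lL) /L tmap_tm ?unitlA ?bone ?alone ?aone //; lin_tac.
rewrite -sigma_SH_l tlift_push //; apply: eq_tlift => h1 h2.
rewrite cp_mul_oneA_r tlift_push //; apply: eq_tlift => x1 x2.
rewrite tlift_push //; apply: eq_tlift => y1 y2.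
by rewrite /L tmap_tm -?almul -?alD ?addNr //; lin_tac.
Qed.

Lemma cp_mul_SH_r d z :
  tlift (fun z1 z2 => mu (tm d z1) (tm oneA (SH z2))) (DH z) = eH z *: tm (beta d) oneH.
Proof.
pose L := tmap (fun a => mulA d (beta a)) (fun z => alpha (al (- k) z)).
have lL : lin L by rewrite /L; lin_tac.
rewrite -[RHS](_ : L (eH z *: tm oneA oneH) = _); last first.
  by rewrite (linZ lL) /L tmap_tm ?bone ?unitrA ?alone ?aone //; lin_tac.
rewrite -sigma_SH_r tlift_push //; apply: eq_tlift => h1 h2.
rewrite cp_mul_oneA_r tlift_push //; apply: eq_tlift => x1 x2.
rewrite tlift_push //; apply: eq_tlift => y1 y2.
by rewrite /L tmap_tm -?almul -?alD ?addNr //; lin_tac.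
Qed.

Lemma alpha_powers_reassoc u y h1 :
  mulH (al (m - 1) u) (al (-2) (mulH (al m y) (alphai h1)))
  = mulH (al (m - 2) (mulH u y)) (al (-2) h1).
Proof.
have e1 : al (m - 1) u = alpha (al (m - 2) u).
  by rewrite -[alpha _]/(al 1 _) -alD; apply: alE; lia.
have e2 : al (-2) (mulH (al m y) (alphai h1)) = mulH (al (m - 2) y) (al (-3) h1).
  by rewrite almul -[alphai h1]/(al (-1) h1) -!alD; congr mulH; apply: alE; lia.
have e3 : al (-2) h1 = alpha (al (-3) h1).
  by rewrite -[alpha _]/(al 1 _) -alD; apply: alE; lia.
by rewrite e1 e2 e3 assocH almul.
Qed.

Lemma lin_cp_S : lin S. Proof. by apply: tlift_lin; bil_tac. Qed.

Lemma cp_S_tm a g : S (tm a g) = tlift (fun y z =>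
  mu (tm oneA (SH (mulH (al (m - 1) y) (al (-2) g)))) (tm (SA z) oneH)) (rho a).
Proof. by rewrite /cp_S tlift_tm //; bil_tac. Qed.

Lemma sm_D_tm a h : smD (tm a h) = tlift (fun x1 x2 => tlift (fun y z => tlift (fun h1 h2 =>
  tm (tm x1 (mulH (al m y) (alphai h1))) (tm (beta z) h2)) (DH h)) (rho x2)) (DA a).
Proof. by rewrite /sm_D tlift_tm //; bil_tac. Qed.

Lemma sm_e_tm a h : sme (tm a h) = eA a * eH h.
Proof.
rewrite /sm_e /tliftK tlift_tm //.
split=> [w c x y|v c x y] /=; rewrite ?leA ?leH.
  by rewrite mulrDl -mulrA.
by rewrite mulrDr mulrCA.
Qed.

Lemma cp_mul_S_assoc u v y z h1 h2 :
  mu (mu (tm oneA (SH (mulH (al (m - 1) u) (al (-2) (mulH (al m y) (alphai h1))))))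
         (tm (SA v) oneH)) (tm (beta z) h2)
  = mu (tm oneA (alpha (SH (mulH (al (m - 2) (mulH u y)) (al (-2) h1)))))
       (tm (mulA (SA v) z) h2).
Proof.
rewrite -[tm (beta z) h2]BiK Bi_tm beK -assocT B_tm bone cp_mul_oneH_l aiK.
by rewrite alpha_powers_reassoc.
Qed.

Let conv_l_kernel h w (t : tensor A A) := tlift (fun v z => tlift (fun h1 h2 =>
  mu (tm oneA (alpha (SH (mulH (al (m - 2) w) (al (-2) h1))))) (tm (mulA (SA v) z) h2))
  (DH h)) t.

Let bil_conv_l_kernel h : bilin (conv_l_kernel h).
Proof. by rewrite /conv_l_kernel; bil_tac. Qed.

Lemma cp_S_conv_l_expand a h :
  tlift (fun y z => mu (S y) z) (smD (tm a h)) =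
  tlift (fun x1 x2 => tlift (fun u v => tlift (fun y z =>
    conv_l_kernel h (mulH u y) (tm v z)) (rho x2)) (rho x1)) (DA a).
Proof.
rewrite sm_D_tm tlift_push; last by lin_tac.
apply: eq_tlift => x1 x2; rewrite tlift_push; last by lin_tac.
transitivity (tlift (fun y z => tlift (fun u v => tlift (fun h1 h2 =>
  mu (mu (tm oneA (SH (mulH (al (m - 1) u) (al (-2) (mulH (al m y) (alphai h1))))))
       (tm (SA v) oneH)) (tm (beta z) h2)) (DH h)) (rho x1)) (rho x2)).
  apply: eq_tlift => y z; rewrite tlift_push; last by lin_tac.
  rewrite exchange_tlift; apply: eq_tlift => h1 h2.
  rewrite tlift_tm; last by bil_tac.
  by rewrite cp_S_tm tlift_pushl.
rewrite exchange_tlift; apply: eq_tlift => u v; apply: eq_tlift => y z.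
rewrite /conv_l_kernel tlift_tm; last by bil_tac.
by apply: eq_tlift => h1 h2; rewrite cp_mul_S_assoc.
Qed.

Lemma cp_S_conv_l_tm a h :
  tlift (fun y z => mu (S y) z) (smD (tm a h)) = (eA a * eH h) *: tm oneA oneH.
Proof.
have bil_kernel := bil_conv_l_kernel h.
rewrite cp_S_conv_l_expand.
(* the comodule-coalgebra axiom merges the coactions of a_1 and a_2 *)
transitivity (tlift (fun w c => conv_l_kernel h w (DA c)) (rho a)).
  rewrite -tlift_tmap //; try lin_tac.
  rewrite (hcc_D hC a) tlift_push; last by lin_tac.
  apply: eq_tlift => x1 x2; rewrite tlift_push; last by lin_tac.
  apply: eq_tlift => u v; rewrite tlift_push; last by lin_tac.
  by apply: eq_tlift => y z; rewrite tlift_tm.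
pose Phi w := tlift (fun h1 h2 =>
  mu (tm oneA (alpha (SH (mulH (al (m - 2) w) (al (-2) h1))))) (tm oneA h2)) (DH h).
have lPhi : lin Phi by rewrite /Phi; lin_tac.
transitivity (tlift (fun w c => Phi (eA c *: w)) (rho a)).
  apply: eq_tlift => w c.
  rewrite (linZ lPhi) /conv_l_kernel exchange_tlift /Phi -tlift_scalef.
  apply: eq_tlift => h1 h2.
  rewrite -tlift_push; last by lin_tac.
  rewrite -(bilZr _ _ _ bilmu) -tmZl -(tlift_pushl (F := @tm K A H)) ?SA_conv_l //.
  exact: bil_tm.
rewrite -tlift_push // rcnte (linZ lPhi) /Phi -scalerA; congr (_ *: _).
rewrite -cp_mul_SH_l; apply: eq_tlift => h1 h2.
by rewrite alone unitlH SHa -[alpha (alpha _)]/(al 2 _) -alD.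
Qed.

Lemma cp_S_conv_l X : tlift (fun y z => mu (S y) z) (smD X) = sme X *: tm oneA oneH.
Proof.
move: X; apply: tensor_lin_ext; try lin_tac.
by move=> a h; rewrite cp_S_conv_l_tm sm_e_tm.
Qed.

Let conv_r_summand h (x1 : A) (y u : H) (v : A) := tlift (fun h1 h2 =>
  mu (mu (tm (betai x1) (alphai (mulH (al m y) (alphai h1))))
         (tm oneA (SH (mulH (al (m - 1) (alpha u)) (al (-2) h2)))))
     (tm (beta (SA (beta v))) oneH)) (DH h).

Lemma conv_r_summand_sum h x1 y c :
  tlift (fun y1 y2 => conv_r_summand h x1 (alpha y1) y2 (betai c)) (DH y)
  = eH y *: (eH h *: tm (mulA x1 (beta (SA c))) oneH).
Proof.
pose F g g' := mu (mu (tm (betai x1) g) (tm oneA (SH g'))) (tm (beta (SA c)) oneH).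
have bF : bilin F by rewrite /F; bil_tac.
transitivity (tlift F (DH (mulH (al m y) (al (-2) h)))).
  rewrite DHmul tlift_tmul2 // (DHn m y) tlift_tmap; try lin_tac; try bil_tac.
  apply: eq_tlift => y1 y2; rewrite DHn tlift_tmap; try lin_tac; try bil_tac.
  apply: eq_tlift => h1 h2; rewrite /F biK aimul.
  have e1 : alphai (al m (alpha y1)) = al m y1.
    by rewrite -[alphai _]/(al (-1) _) -[alpha y1]/(al 1 y1) -!alD; apply: alE; lia.
  have e2 : al (m - 1) (alpha y2) = al m y2.
    by rewrite -[alpha y2]/(al 1 y2) -!alD; apply: alE; lia.
  by rewrite e1 e2.
rewrite /F -(tlift_pushl (F := mu)) // cp_mul_SH_r biK (bilZl _ _ _ bilmu).
by rewrite cp_mul_oneH_l aone eHmul !eHn scalerA.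
Qed.

Lemma cp_S_conv_r_expand a h :
  tlift (fun y z => mu y (S z)) (smD (tm a h)) =
  tlift (fun x1 x2 => tlift (fun y c => tlift (fun u v =>
    conv_r_summand h x1 y u v) (rho c)) (rho x2)) (DA a).
Proof.
rewrite sm_D_tm tlift_push; last by lin_tac.
apply: eq_tlift => x1 x2; rewrite tlift_push; last by lin_tac.
apply: eq_tlift => y c; rewrite tlift_push; last by lin_tac.
rewrite /conv_r_summand exchange_tlift; apply: eq_tlift => h1 h2.
rewrite tlift_tm; last by bil_tac.
rewrite cp_S_tm rhob tlift_tmap; try lin_tac; try bil_tac.
rewrite tlift_pushr //; apply: eq_tlift => u v.
by rewrite -[tm x1 _]BiK assocT Bi_tm B_tm aone.
Qed.

Lemma cp_S_conv_r_tm a h :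
  tlift (fun y z => mu y (S z)) (smD (tm a h)) = (eA a * eH h) *: tm oneA oneH.
Proof.
rewrite cp_S_conv_r_expand.
transitivity (tlift (fun x1 x2 => tlift (fun y c =>
  eH y *: (eH h *: tm (mulA x1 (beta (SA c))) oneH)) (rho x2)) (DA a)).
  apply: eq_tlift => x1 x2.
  transitivity (tlift (fun y t => tlift (conv_r_summand h x1 y) t)
     (tmap alpha id (tmap alphai rho (rho x2)))).
    rewrite tmap_comp; try lin_tac.
    rewrite tlift_tmap; try lin_tac; try (rewrite /conv_r_summand; bil_tac).
    by apply: eq_tlift => y c; rewrite aiK.
  rewrite -(hcm_coassoc hCm x2) tlift_tmap; try lin_tac;
    try (rewrite /conv_r_summand; bil_tac).
  rewrite tlift_tassoc; last by rewrite /conv_r_summand; bil_tac.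
  rewrite tlift_tmap; try lin_tac; try (rewrite /conv_r_summand; bil_tac).
  apply: eq_tlift => y c; rewrite -conv_r_summand_sum.
  apply: eq_tlift => y1 y2; rewrite tlift_tm //.
  by rewrite /conv_r_summand; bil_tac.
transitivity (tlift (fun x1 x2 => eH h *: tm (mulA x1 (SA x2)) oneH) (DA a)).
  apply: eq_tlift => x1 x2.
  pose Th c := eH h *: tm (mulA x1 (beta (SA c))) oneH.
  have lTh : lin Th by rewrite /Th; lin_tac.
  transitivity (tlift (fun y c => Th (eH y *: c)) (rho x2)).
    by apply: eq_tlift => y c; rewrite (linZ lTh).
  by rewrite -tlift_push // rcnt /Th betaSA biK.
rewrite tlift_scalef -(tlift_pushl (F := @tm K A H)); last exact: bil_tm.
by rewrite SA_conv_r tmZl scalerA mulrC.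
Qed.

Lemma cp_S_conv_r X : tlift (fun y z => mu y (S z)) (smD X) = sme X *: tm oneA oneH.
Proof.
move: X; apply: tensor_lin_ext; try lin_tac.
by move=> a h; rewrite cp_S_conv_r_tm sm_e_tm.
Qed.

Lemma cp_str_S X : B (S X) = S (B X).
Proof.
move: X; apply: tensor_lin_ext; try lin_tac.
move=> a h; rewrite B_tm !cp_S_tm rhob tlift_tmap; try lin_tac; try bil_tac.
rewrite tlift_push //; apply: eq_tlift => y z.
by rewrite muB !B_tm bone aone betaSA SHa amul !alC.
Qed.

Lemma cp_S_is_antipode : is_antipode mu (cp_one oneH oneA) smD sme B S.
Proof.
split; [exact: lin_cp_S | exact: cp_str_S | exact: cp_S_conv_l | exact: cp_S_conv_r].
Qed.

End CrossedProductAntipode.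

Theorem theorem3p5 (K : fieldType) (H A : lmodType K) (m k : int)
  (mulH : H -> H -> H) (oneH : H) (DH : H -> tensor H H) (eH : H -> K)
  (alpha alphai : H -> H)
  (mulA : A -> A -> A) (oneA : A) (DA : A -> tensor A A) (eA : A -> K)
  (beta betai : A -> A)
  (act : H -> A -> A) (rho : A -> tensor H A) (sigma : H -> H -> A)
  (SH : H -> H) (SA : A -> A) :
  monoidal_hom_bialgebra mulH oneH DH eH alpha alphai ->
  monoidal_hom_algebra mulA oneA beta betai ->
  monoidal_hom_coalgebra DA eA beta betai ->
  weak_hom_module_algebra mulA oneA DH eH act ->
  hom_comodule_coalgebra mulH oneH DH eH alpha alphai DA eA beta betai rho ->
  bilin sigma ->
  monoidal_hom_bialgebra
    (cp_mul mulH DH alpha alphai mulA beta betai act sigma m k)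
    (cp_one oneH oneA)
    (sm_D mulH DH alpha alphai DA beta rho m)
    (sm_e eH eA)
    (cp_str alpha beta) (cp_stri alphai betai) ->
  sigma_antipode mulH oneH DH eH alpha oneA sigma SH ->
  lin SA ->
  (forall a, beta (SA a) = SA (beta a)) ->
  (forall a, tlift (fun x y => mulA (SA x) y) (DA a) = eA a *: oneA) ->
  (forall a, tlift (fun x y => mulA x (SA y)) (DA a) = eA a *: oneA) ->
  monoidal_hom_hopf
    (cp_mul mulH DH alpha alphai mulA beta betai act sigma m k)
    (cp_one oneH oneA)
    (sm_D mulH DH alpha alphai DA beta rho m)
    (sm_e eH eA)
    (cp_str alpha beta) (cp_stri alphai betai)
    (cp_S mulH oneH DH alpha alphai mulA oneA beta betai act rho sigma m k SH SA).
Proof.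
move=> hH hAa hAc hW hC bilsigma hT hSH linSA betaSA SA_conv_l SA_conv_r.
by split=> //; apply: cp_S_is_antipode.
Qed.
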